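(* Let $\mathcal H_S,\mathcal H_M$ be finite-dimensional complex Hilbert spaces and let $\Psi=\sum_{t}\mu_t\,\phi_t\otimes\lambda_t$ be a unit vector in $\mathcal H_S\otimes\mathcal H_M$, where the sum is finite, the $\phi_t\in\mathcal H_S$ and $\lambda_t\in\mathcal H_M$ are unit vectors, the $\mu_t$ are nonzero complex numbers, and $\Pr(\phi_t)>0$ for all $t$. (a) If the vectors $\{\lambda_j\}$ are all collinear, then the $\{\phi_j\}$ are indistinguishable relative to $M$. (b) If the vectors $\{\phi_j\}$ are linearly independent and indistinguishable relative to $M$, then the $\{\lambda_j\}$ are all collinear, i.e. $\lambda_j=e^{i\theta_j}\Lambda$ for a single unit vector $\Lambda$ and real phases $\theta_j$.
   Context: For the pure joint state $\Psi$ with $\rho_S=\mathrm{Tr}_M|\Psi\rangle\langle\Psi|$, and unit vectors $\phi\in\mathcal H_S$, $\eta\in\mathcal H_M$: $\Pr(\phi)=\langle\phi|\rho_S|\phi\rangle$, $\Pr(\phi\wedge\eta)=|\langle\phi\otimes\eta|\Psi\rangle|^2$, $\Pr(\eta\mid\phi)=\Pr(\phi\wedge\eta)/\Pr(\phi)$. Values $\{\phi_j\}$ of $S$ are indistinguishable relative to $M$ iff $\Pr(\eta\mid\phi_j)$ is independent of $j$ for every unit vector $\eta\in\mathcal H_M$. *)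

(* H_S = 'cV[C]_n, H_M = 'cV[C]_m; H_S (x) H_M is identified with the
   space of n x m coefficient matrices, u (x) v  <->  u *m v^T. *)
From mathcomp Require Import all_boot all_order all_algebra.
Set Implicit Arguments. Unset Strict Implicit. Unset Printing Implicit Defensive.
Import Order.TTheory GRing.Theory Num.Theory.
Local Open Scope ring_scope.

Section QM.
Variable C : numClosedFieldType.

Definition dotc (n : nat) (u v : 'cV[C]_n) : C := \sum_(i < n) (u i 0)^* * v i 0.

Definition unit_vec (n : nat) (u : 'cV[C]_n) : Prop := dotc u u = 1.

Definition tens (n m : nat) (u : 'cV[C]_n) (v : 'cV[C]_m) : 'M[C]_(n, m) :=
  u *m v^T.

Definition dotT (n m : nat) (A B : 'M[C]_(n, m)) : C :=
  \sum_(i < n) \sum_(j < m) (A i j)^* * B i j.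

Definition unit_state (n m : nat) (Psi : 'M[C]_(n, m)) : Prop := dotT Psi Psi = 1.

(* rho_S = Tr_M |Psi><Psi| *)
Definition rhoS (n m : nat) (Psi : 'M[C]_(n, m)) : 'M[C]_n :=
  \matrix_(i < n, i' < n) \sum_(j < m) Psi i j * (Psi i' j)^*.

Definition PrS (n m : nat) (Psi : 'M[C]_(n, m)) (phi : 'cV[C]_n) : C :=
  \sum_(i < n) \sum_(i' < n) (phi i 0)^* * rhoS Psi i i' * phi i' 0.

Definition PrSM (n m : nat) (Psi : 'M[C]_(n, m)) (phi : 'cV[C]_n) (eta : 'cV[C]_m) : C :=
  `| dotT (tens phi eta) Psi | ^+ 2.

Definition Prcond (n m : nat) (Psi : 'M[C]_(n, m)) (eta : 'cV[C]_m) (phi : 'cV[C]_n) : C :=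
  PrSM Psi phi eta / PrS Psi phi.

Definition indist (n m k : nat) (Psi : 'M[C]_(n, m)) (phi : 'I_k -> 'cV[C]_n) : Prop :=
  forall eta : 'cV[C]_m, unit_vec eta ->
    forall j j' : 'I_k, Prcond Psi eta (phi j) = Prcond Psi eta (phi j').

Definition collinear (m k : nat) (lam : 'I_k -> 'cV[C]_m) : Prop :=
  exists v : 'cV[C]_m, forall j, exists c : C, lam j = c *: v.

Definition lin_indep (n k : nat) (phi : 'I_k -> 'cV[C]_n) : Prop :=
  forall c : 'I_k -> C, \sum_(t < k) c t *: phi t = 0 -> forall t, c t = 0.

End QM.

From mathcomp Require Import all_boot all_order all_algebra.
From mathcomp Require Import ring.
Set Implicit Arguments. Unset Strict Implicit.
Import Order.TTheory GRing.Theory Num.Theory.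
Local Open Scope ring_scope.

(* Everything is governed by the relative state <p|Psi> of M: Pr(p /\ eta) is
   |<eta, <p|Psi>>|^2 and Pr(p) is the squared norm of <p|Psi>, so Pr(eta | p)
   is the transition probability from eta to the line spanned by <p|Psi>.
   (a) If all lam_t lie on one line, so do all relative states, and the
   conditional probabilities coincide.
   (b) Equal transition probabilities force every eta orthogonal to
   <phi_0|Psi> to be orthogonal to every <phi_j|Psi> = sum_t mu_t <phi_j,phi_t> lam_t,
   i.e. to sum_t mu_t <eta,lam_t> phi_t; by linear independence of the phi_t
   and mu_t <> 0, eta is orthogonal to every lam_t.  Hence every lam_t lies
   on the line of <phi_0|Psi>, and being unit vectors they differ from its
   normalisation by phases. *)

Section InnerProduct.
Variable C : numClosedFieldType.
Implicit Types a b : C.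

Lemma dotc_sumr n (u : 'cV[C]_n) I (r : seq I) (P : pred I) (f : I -> 'cV[C]_n) :
  dotc u (\sum_(t <- r | P t) f t) = \sum_(t <- r | P t) dotc u (f t).
Proof.
rewrite /dotc exchange_big /=; apply: eq_bigr => i _.
by rewrite summxE mulr_sumr.
Qed.

Lemma dotcZr n (u v : 'cV[C]_n) a : dotc u (a *: v) = a * dotc u v.
Proof. by rewrite /dotc mulr_sumr; apply: eq_bigr => i _; rewrite mxE mulrCA. Qed.

Lemma dotcZl n (u v : 'cV[C]_n) a : dotc (a *: u) v = a^* * dotc u v.
Proof. by rewrite /dotc mulr_sumr; apply: eq_bigr => i _; rewrite mxE rmorphM mulrA. Qed.

Lemma dotcBr n (u v w : 'cV[C]_n) : dotc u (v - w) = dotc u v - dotc u w.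
Proof. by rewrite /dotc -sumrB; apply: eq_bigr => i _; rewrite !mxE mulrBr. Qed.

Lemma dotcC n (u v : 'cV[C]_n) : dotc v u = (dotc u v)^*.
Proof.
rewrite /dotc rmorph_sum; apply: eq_bigr => i _.
by rewrite rmorphM /= conjCK mulrC.
Qed.

Lemma dotc0l n (u : 'cV[C]_n) : dotc 0 u = 0.
Proof. by rewrite /dotc big1 // => i _; rewrite mxE rmorph0 mul0r. Qed.

Lemma dotc_ge0 n (u : 'cV[C]_n) : 0 <= dotc u u.
Proof. by apply: sumr_ge0 => i _; rewrite mulrC mul_conjC_ge0. Qed.

Lemma dotc_eq0 n (u : 'cV[C]_n) : (dotc u u == 0) = (u == 0).
Proof.
apply/idP/eqP => [|->]; last by rewrite dotc0l.
rewrite /dotc psumr_eq0 => [/allP u0|i _]; last by rewrite mulrC mul_conjC_ge0.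
apply/matrixP => i j; rewrite ord1 mxE.
by have := u0 i (mem_index_enum _); rewrite mulrC mul_conjC_eq0 => /eqP.
Qed.

Lemma unit_vec_exists n (u : 'cV[C]_n) : u != 0 ->
  exists2 a : C, a != 0 & unit_vec (a *: u).
Proof.
rewrite -dotc_eq0 => uu_neq0.
have uu_gt0 : 0 < dotc u u by rewrite lt_def uu_neq0 dotc_ge0.
exists (sqrtC (dotc u u)^-1); first by rewrite sqrtC_eq0 invr_eq0.
rewrite /unit_vec dotcZl dotcZr mulrA geC0_conj ?sqrtC_ge0 ?invr_ge0 ?dotc_ge0 //.
by rewrite -expr2 sqrtCK mulVf.
Qed.

Lemma unit_vecZ_norm n (v : 'cV[C]_n) c :
  unit_vec v -> unit_vec (c *: v) -> `|c| = 1.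
Proof.
rewrite /unit_vec dotcZl dotcZr => -> /eqP; rewrite mulr1 mulrC -normCK.
by rewrite sqrp_eq1 // => /eqP.
Qed.

(* The residual [w - c u] is orthogonal to [u], hence to itself. *)
Lemma orthogonal_sub_collinear n (u w : 'cV[C]_n) :
  dotc u u != 0 -> (forall eta, dotc eta u = 0 -> dotc eta w = 0) ->
  w = (dotc u w / dotc u u) *: u.
Proof.
move=> uu_neq0 orth_uw; set c := _ / _; apply/eqP; rewrite -subr_eq0 -dotc_eq0.
set r := w - c *: u.
have ur0 : dotc u r = 0 by rewrite /r dotcBr dotcZr /c divfK // subrr.
have ru0 : dotc r u = 0 by rewrite dotcC ur0 rmorph0.
by rewrite {2}/r dotcBr dotcZr ru0 mulr0 subr0 orth_uw.
Qed.

Definition trans_prob n (eta v : 'cV[C]_n) : C := `|dotc eta v| ^+ 2 / dotc v v.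

Lemma trans_probZr n (eta v : 'cV[C]_n) a : a != 0 ->
  trans_prob eta (a *: v) = trans_prob eta v.
Proof.
move=> a_neq0; rewrite /trans_prob dotcZl !dotcZr normrM exprMn mulrA.
rewrite [a^* * a]mulrC -normCK.
by rewrite -mulf_div divff ?mul1r // sqrf_eq0 normr_eq0.
Qed.

Lemma trans_prob_eq0 n (eta v : 'cV[C]_n) : dotc v v != 0 ->
  (trans_prob eta v == 0) = (dotc eta v == 0).
Proof.
move=> vv_neq0; rewrite /trans_prob mulf_eq0 invr_eq0 (negbTE vv_neq0) orbF.
by rewrite sqrf_eq0 normr_eq0.
Qed.

Lemma eq_trans_prob_orthogonal n (u w : 'cV[C]_n) :
  dotc w w != 0 ->
  (forall eta, unit_vec eta -> trans_prob eta u = trans_prob eta w) ->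
  forall eta, dotc eta u = 0 -> dotc eta w = 0.
Proof.
move=> ww_neq0 eq_uw eta eta_u0; have [->|eta_neq0] := eqVneq eta 0.
  by rewrite dotc0l.
have [a a_neq0 unit_aeta] := unit_vec_exists eta_neq0.
have /eqP : trans_prob (a *: eta) w = 0.
  by rewrite -eq_uw // /trans_prob dotcZl eta_u0 mulr0 normr0 expr0n mul0r.
rewrite trans_prob_eq0 // dotcZl mulf_eq0 conjC_eq0 (negbTE a_neq0).
by move/eqP.
Qed.

End InnerProduct.

Section RelativeState.
Variable C : numClosedFieldType.

Definition relative_state n m (Psi : 'M[C]_(n, m)) (p : 'cV[C]_n) : 'cV[C]_m :=
  \col_j \sum_(i < n) (p i 0)^* * Psi i j.

Lemma dotT_tens n m (Psi : 'M[C]_(n, m)) p (eta : 'cV[C]_m) :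
  dotT (tens p eta) Psi = dotc eta (relative_state Psi p).
Proof.
rewrite /dotT /dotc exchange_big /=; apply: eq_bigr => j _.
rewrite mxE mulr_sumr; apply: eq_bigr => i _.
by rewrite /tens !mxE big_ord1 !mxE rmorphM mulrA [_ * (p i 0)^*]mulrC.
Qed.

Lemma PrS_relative_state n m (Psi : 'M[C]_(n, m)) p :
  PrS Psi p = dotc (relative_state Psi p) (relative_state Psi p).
Proof.
rewrite /PrS /dotc.
under eq_bigr => i _ do under eq_bigr => i' _ do rewrite mxE mulr_sumr mulr_suml.
under eq_bigr => i _ do rewrite exchange_big /=.
rewrite exchange_big /=; apply: eq_bigr => j _.
rewrite !mxE rmorph_sum /= mulrC mulr_suml; apply: eq_bigr => i _.
rewrite mulr_sumr; apply: eq_bigr => i' _.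
by rewrite rmorphM /= conjCK; ring.
Qed.

Lemma Prcond_trans_prob n m (Psi : 'M[C]_(n, m)) eta p :
  Prcond Psi eta p = trans_prob eta (relative_state Psi p).
Proof. by rewrite /Prcond /PrSM dotT_tens PrS_relative_state. Qed.

Lemma relative_state_sum n m k (mu : 'I_k -> C) (phi : 'I_k -> 'cV[C]_n)
    (lam : 'I_k -> 'cV[C]_m) p :
  relative_state (\sum_(t < k) mu t *: tens (phi t) (lam t)) p =
  \sum_(t < k) (mu t * dotc p (phi t)) *: lam t.
Proof.
apply/matrixP => j z; rewrite ord1 !mxE summxE.
under eq_bigr => i _ do rewrite summxE mulr_sumr.
rewrite exchange_big /=; apply: eq_bigr => t _.
rewrite [in RHS]mxE /dotc mulr_sumr mulr_suml; apply: eq_bigr => i _.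
by rewrite !mxE big_ord1 !mxE; ring.
Qed.

Lemma relative_state_sum_on_line n m k (mu : 'I_k -> C) (phi : 'I_k -> 'cV[C]_n)
    (lam : 'I_k -> 'cV[C]_m) (v : 'cV[C]_m) :
  (forall t, exists c, lam t = c *: v) ->
  forall p, exists s,
    relative_state (\sum_(t < k) mu t *: tens (phi t) (lam t)) p = s *: v.
Proof.
move=> lam_v p; rewrite relative_state_sum.
apply: (big_ind (fun x => exists s, x = s *: v)) => [|_ _ [a ->] [b ->]|t _].
- by exists 0; rewrite scale0r.
- by exists (a + b); rewrite scalerDl.
- by have [c ->] := lam_v t; exists (mu t * dotc p (phi t) * c); rewrite scalerA.
Qed.

Lemma dotc_relative_state_sum n m k (mu : 'I_k -> C) (phi : 'I_k -> 'cV[C]_n)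
    (lam : 'I_k -> 'cV[C]_m) p eta :
  dotc eta (relative_state (\sum_(t < k) mu t *: tens (phi t) (lam t)) p) =
  dotc p (\sum_(t < k) (mu t * dotc eta (lam t)) *: phi t).
Proof.
rewrite relative_state_sum !dotc_sumr; apply: eq_bigr => t _.
by rewrite !dotcZr; ring.
Qed.

Lemma lin_indep_orthogonal n m k (mu : 'I_k -> C) (phi : 'I_k -> 'cV[C]_n)
    (lam : 'I_k -> 'cV[C]_m) eta :
  lin_indep phi -> (forall t, mu t != 0) ->
  (forall j, dotc eta (relative_state
                 (\sum_(t < k) mu t *: tens (phi t) (lam t)) (phi j)) = 0) ->
  forall t, dotc eta (lam t) = 0.
Proof.
move=> indep_phi mu_neq0 orth_rel t.
pose z := \sum_(t < k) (mu t * dotc eta (lam t)) *: phi t.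
have z0 : z = 0.
  apply/eqP; rewrite -dotc_eq0 {1}/z dotc_sumr big1 // => j _.
  rewrite dotcZr /z [dotc _ (phi j)]dotcC -dotc_relative_state_sum.
  by rewrite orth_rel rmorph0 mulr0.
by have /eqP := indep_phi _ z0 t; rewrite mulf_eq0 (negbTE (mu_neq0 t)) => /eqP.
Qed.

Lemma unit_state_neq0 n m (Psi : 'M[C]_(n, m)) : unit_state Psi -> Psi != 0.
Proof.
apply: contra_eqN => /eqP ->; rewrite /unit_state /dotT big1 1?eq_sym ?oner_neq0 //.
by move=> i _; rewrite big1 // => j _; rewrite mxE mulr0.
Qed.

End RelativeState.

Theorem lemmaA1 (C : numClosedFieldType) (n m k : nat)
  (mu : 'I_k -> C) (phi : 'I_k -> 'cV[C]_n) (lam : 'I_k -> 'cV[C]_m)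
  (Psi : 'M[C]_(n, m))
  (hPsi : Psi = \sum_(t < k) mu t *: tens (phi t) (lam t))
  (hunit : unit_state Psi)
  (hphi : forall t, unit_vec (phi t))
  (hlam : forall t, unit_vec (lam t))
  (hmu : forall t, mu t != 0)
  (hpos : forall t, 0 < PrS Psi (phi t)) :
  (collinear lam -> indist Psi phi) /\
  (lin_indep phi -> indist Psi phi ->
     exists Lam : 'cV[C]_m, unit_vec Lam /\
       forall j, exists c : C, `|c| = 1 /\ lam j = c *: Lam).
Proof.
have rel_neq0 t :
    dotc (relative_state Psi (phi t)) (relative_state Psi (phi t)) != 0.
  by rewrite -PrS_relative_state gt_eqF.
split=> [[v lam_v] eta _ j j'|indep_phi indist_phi].
  suff Prcond_v i : Prcond Psi eta (phi i) = trans_prob eta v by rewrite !Prcond_v.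
  have [s rel_s] := relative_state_sum_on_line mu phi lam_v (phi i).
  rewrite -hPsi in rel_s.
  have s_neq0 : s != 0.
    by apply: contraNneq (rel_neq0 i); rewrite rel_s => ->; rewrite scale0r dotc0l.
  by rewrite Prcond_trans_prob rel_s trans_probZr.
have [t0 _ | no_index] := pickP (@predT 'I_k); last first.
  have /negP[] := unit_state_neq0 hunit.
  by rewrite hPsi big1 // => t _; have := no_index t.
set u := relative_state Psi (phi t0).
have orth_lam eta : dotc eta u = 0 -> forall t, dotc eta (lam t) = 0.
  move=> eta_u0; apply: (lin_indep_orthogonal indep_phi hmu) => j.
  rewrite -hPsi; apply: eq_trans_prob_orthogonal eta_u0 => // eta' unit_eta'.
  by rewrite -!Prcond_trans_prob; apply: indist_phi.
have u_neq0 : u != 0 by rewrite -dotc_eq0 rel_neq0.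
have [a a_neq0 unit_au] := unit_vec_exists u_neq0.
exists (a *: u); split=> // j.
set b := dotc u (lam j) / dotc u u / a.
have lam_au : lam j = b *: (a *: u).
  by rewrite scalerA divfK // -orthogonal_sub_collinear ?rel_neq0 // => eta /orth_lam.
by exists b; split=> //; apply: unit_vecZ_norm unit_au _; rewrite -lam_au.
Qed.
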